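(* For all words $x,y$ over a finite alphabet $\Sigma$, $\mathrm{ged}(x,y)\le\mathrm{ned}(x,y)$.
   Context: An edit path from $x$ to $y$ is a sequence $p=(a_1,b_1)\cdots(a_n,b_n)$ with $(a_i,b_i)\in(\Sigma\cup\{\varepsilon\})^2\setminus\{(\varepsilon,\varepsilon)\}$, $a_1\cdots a_n=x$ and $b_1\cdots b_n=y$; $|p|=n$ and $\mathrm{wgt}(p)=|\{i:a_i\ne b_i\}|$ (uniform weights: no-ops cost $0$, substitutions, insertions and deletions cost $1$). $\mathrm{ed}(x,y)=\min_p\mathrm{wgt}(p)$; $\mathrm{ned}(x,y)=\min_p\mathrm{wgt}(p)/|p|$ (with $\mathrm{ned}(\varepsilon,\varepsilon)=0$); $\mathrm{ged}(x,y)=\frac{2\,\mathrm{ed}(x,y)}{|x|+|y|+\mathrm{ed}(x,y)}$ (with $\mathrm{ged}(\varepsilon,\varepsilon)=0$). *)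

From HB Require Import structures.
From mathcomp Require Import all_boot all_order all_algebra.
From mathcomp Require Import boolp classical_sets reals.
Set Implicit Arguments. Unset Strict Implicit. Unset Printing Implicit Defensive.
Import Order.TTheory GRing.Theory Num.Theory.

Section EditDistance.
Variable Sigma : finType.

(* an edit operation (a,b) with a,b in Sigma ∪ {ε}; ε is None *)
Definition edit_op := (option Sigma * option Sigma)%type.

Definition valid_op (o : edit_op) : bool := ~~ ((o.1 == None) && (o.2 == None)).

Definition concat_opt (s : seq (option Sigma)) : seq Sigma := pmap id s.

Definition edit_path (p : seq edit_op) (x y : seq Sigma) : Prop :=
  all valid_op p /\ concat_opt (map fst p) = x /\ concat_opt (map snd p) = y.

Definition wgt (p : seq edit_op) : nat := count (fun o : edit_op => o.1 != o.2) p.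

Definition trivial_path (x y : seq Sigma) : seq edit_op :=
  [seq (Some a, None) | a <- x] ++ [seq (None, Some b) | b <- y].

Lemma trivial_path_ok x y : edit_path (trivial_path x y) x y.
Proof.
rewrite /edit_path /trivial_path /concat_opt !map_cat -!map_comp.
split; first by rewrite all_cat; apply/andP; split; apply/allP => o /mapP [? _ ->].
split.
- rewrite pmap_cat; elim: x => [|a x IH] /=; first by elim: y.
  by rewrite IH.
- rewrite pmap_cat; elim: x => [|a x IH] /=; last by [].
  by elim: y => [|b y IH] //=; rewrite IH.
Qed.

Definition ed_pred (x y : seq Sigma) : pred nat :=
  fun n => `[< exists p, edit_path p x y /\ wgt p = n >].

Lemma ed_exists x y : exists n, ed_pred x y n.
Proof.
exists (wgt (trivial_path x y)); apply/asboolP.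
by exists (trivial_path x y); split => //; apply: trivial_path_ok.
Qed.

Definition ed (x y : seq Sigma) : nat := ex_minn (ed_exists x y).

Variable R : realType.
Local Open Scope ring_scope.

(* ned(x,y) = min_p wgt(p)/|p|, with ned(ε,ε) = 0; the set of edit paths
   between x and y is finite and nonempty, so the min is the infimum *)
Definition ned (x y : seq Sigma) : R :=
  if (x == [::]) && (y == [::]) then 0
  else inf [set r : R | exists p, edit_path p x y /\
                        r = (wgt p)%:R / (size p)%:R].

Definition ged (x y : seq Sigma) : R :=
  if (x == [::]) && (y == [::]) then 0
  else (2 * (ed x y)%:R) / ((size x)%:R + (size y)%:R + (ed x y)%:R).

End EditDistance.

(* An edit path p from x to y reads every letter of x and of y once; a no-op reads two
   letters and any other operation at least one, so 2|p| <= |x| + |y| + wgt p. With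
   e := ed x y <= wgt p =: w and L := |x| + |y| this gives
   ged x y = 2e / (L + e) <= 2w / (L + w) <= w / |p|, and taking the infimum over p
   yields ged x y <= ned x y. *)
From mathcomp Require Import all_boot all_order all_algebra.
From mathcomp Require Import boolp reals.
From mathcomp Require Import zify.
Set Implicit Arguments. Unset Strict Implicit. Unset Printing Implicit Defensive.
Import Order.TTheory GRing.Theory Num.Theory.
Local Open Scope ring_scope.

Lemma ler_ratio_nat (R : numFieldType) (a b c d : nat) :
  (0 < b)%N -> (0 < d)%N -> (a * d <= c * b)%N ->
  a%:R / b%:R <= c%:R / d%:R :> R.
Proof.
move=> b_gt0 d_gt0 le_ad_cb.
rewrite ler_pdivrMr ?ltr0n // mulrAC ler_pdivlMr ?ltr0n //.
by rewrite -!natrM ler_nat.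
Qed.

Section EditPaths.
Variable Sigma : finType.
Implicit Types (p : seq (edit_op Sigma)) (x y : seq Sigma).

Lemma edit_path_size_le p x y :
  edit_path p x y -> (2 * size p <= size x + size y + wgt p)%N.
Proof.
case=> + [<- <-]; rewrite /concat_opt /wgt.
elim: p => [|[a b] p IH] //= /andP [valid_ab /IH].
move: valid_ab; rewrite /valid_op /=.
by case: a => [a|]; case: b => [b|] //=; try case: eqP => _ /=; lia.
Qed.

Lemma edit_path_nil x y : edit_path [::] x y -> x = [::] /\ y = [::].
Proof. by case=> _ [<- <-]. Qed.

Lemma ed_le_wgt p x y : edit_path p x y -> (ed x y <= wgt p)%N.
Proof.
move=> pxy; rewrite /ed; case: ex_minnP => e _; apply.
by apply/asboolP; exists p.
Qed.

Variable R : realType.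

Lemma ged_le_path_ratio p x y :
  ~~ ((x == [::]) && (y == [::])) -> edit_path p x y ->
  ged R x y <= (wgt p)%:R / (size p)%:R.
Proof.
move=> xy_nonempty pxy; rewrite /ged (negbTE xy_nonempty).
have size_p := edit_path_size_le pxy.
have ed_wgt := ed_le_wgt pxy.
have L_gt0 : (0 < size x + size y)%N.
  by move: xy_nonempty; rewrite addn_gt0 !lt0n !size_eq0 negb_and.
have p_gt0 : (0 < size p)%N.
  rewrite lt0n size_eq0; apply/eqP => p_nil.
  by move: pxy L_gt0; rewrite p_nil => /edit_path_nil [-> ->].
rewrite -[2]/(2%:R) -natrM -!natrD ler_ratio_nat //; first lia.
(* 2e|p| <= e(L + w) <= w(L + e), using e <= w *)
by nia.
Qed.

End EditPaths.

Theorem mainTheorem11 (Sigma : finType) (R : realType) (x y : seq Sigma) :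
  ged R x y <= ned R x y.
Proof.
rewrite /ned; case: ifPn => [/andP [/eqP -> /eqP ->]|xy_nonempty].
  by rewrite /ged.
apply: lb_le_inf.
  by eexists; exists (trivial_path x y); split; [apply: trivial_path_ok|].
by move=> _ [p [pxy ->]]; apply: ged_le_path_ratio.
Qed.
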